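(* In the algebra $\mathcal O_q$ defined in the context, with $B_\delta=q^{-2}\mathcal W_1\mathcal W_0-\mathcal W_0\mathcal W_1$, the following hold for all integers $n\ge1$: $$\mathcal W_{-n}=\mathcal W_n-\frac{(q-q^{-1})\mathcal W_0\tilde{\mathcal G}_n}{(q^2-q^{-2})^2}+\frac{q^2[B_\delta,\mathcal W_{1-n}]}{(q^2-q^{-2})^2},\qquad \mathcal W_{n+1}=\mathcal W_{1-n}-\frac{(q-q^{-1})\mathcal W_1\tilde{\mathcal G}_n}{(q^2-q^{-2})^2}-\frac{[B_\delta,\mathcal W_n]}{(q^2-q^{-2})^2}.$$
   Context: All algebras are associative and unital over a field $\mathbb F$; $q\in\mathbb F$ is nonzero and not a root of unity. For elements $X,Y$ of an algebra, $[X,Y]=XY-YX$ and $[X,Y]_q=qXY-q^{-1}YX$. Let $\rho=-(q^2-q^{-2})^2$. The algebra $\mathcal O_q$ is defined by generators $\mathcal W_{-k},\mathcal W_{k+1},\mathcal G_{k+1},\tilde{\mathcal G}_{k+1}$ ($k\in\mathbb N$) and the following relations for all $k,\ell\in\mathbb N$: $[\mathcal W_0,\mathcal W_{k+1}]=[\mathcal W_{-k},\mathcal W_1]=(\tilde{\mathcal G}_{k+1}-\mathcal G_{k+1})/(q+q^{-1})$; $[\mathcal W_0,\mathcal G_{k+1}]_q=[\tilde{\mathcal G}_{k+1},\mathcal W_0]_q=\rho\mathcal W_{-k-1}-\rho\mathcal W_{k+1}$; $[\mathcal G_{k+1},\mathcal W_1]_q=[\mathcal W_1,\tilde{\mathcal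 G}_{k+1}]_q=\rho\mathcal W_{k+2}-\rho\mathcal W_{-k}$; $[\mathcal W_{-k},\mathcal W_{-\ell}]=0$, $[\mathcal W_{k+1},\mathcal W_{\ell+1}]=0$; $[\mathcal W_{-k},\mathcal W_{\ell+1}]+[\mathcal W_{k+1},\mathcal W_{-\ell}]=0$; $[\mathcal W_{-k},\mathcal G_{\ell+1}]+[\mathcal G_{k+1},\mathcal W_{-\ell}]=0$; $[\mathcal W_{-k},\tilde{\mathcal G}_{\ell+1}]+[\tilde{\mathcal G}_{k+1},\mathcal W_{-\ell}]=0$; $[\mathcal W_{k+1},\mathcal G_{\ell+1}]+[\mathcal G_{k+1},\mathcal W_{\ell+1}]=0$; $[\mathcal W_{k+1},\tilde{\mathcal G}_{\ell+1}]+[\tilde{\mathcal G}_{k+1},\mathcal W_{\ell+1}]=0$; $[\mathcal G_{k+1},\mathcal G_{\ell+1}]=0$, $[\tilde{\mathcal G}_{k+1},\tilde{\mathcal G}_{\ell+1}]=0$; $[\tilde{\mathcal G}_{k+1},\mathcal G_{\ell+1}]+[\mathcal G_{k+1},\tilde{\mathcal G}_{\ell+1}]=0$. *)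

From HB Require Import structures.
From mathcomp Require Import all_boot all_order all_algebra.
Set Implicit Arguments. Unset Strict Implicit. Unset Printing Implicit Defensive.
Import GRing.Theory.
Local Open Scope ring_scope.

Definition comm (R : ringType) (x y : R) : R := x * y - y * x.

Definition qcomm (F : fieldType) (A : algType F) (q : F) (x y : A) : A :=
  q *: (x * y) - q^-1 *: (y * x).

Definition rho (F : fieldType) (q : F) : F := - (q ^+ 2 - q ^- 2) ^+ 2.

(* Indexing convention for the generators of O_q:
     Wm k  = W_{-k}       (k in N; so Wm 0 = W_0)
     Wp k  = W_{k+1}      (so Wp 0 = W_1)
     G k   = G_{k+1}
     Gt k  = tilde G_{k+1}
   Oq_rels states that these elements of the F-algebra A satisfy all the
   defining relations of O_q. *)
Definition Oq_rels (F : fieldType) (A : algType F) (q : F)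
    (Wm Wp G Gt : nat -> A) : Prop :=
  [/\ forall k : nat,
        comm (Wm 0%N) (Wp k) = (q + q^-1)^-1 *: (Gt k - G k) /\
        comm (Wm k) (Wp 0%N) = (q + q^-1)^-1 *: (Gt k - G k),
      forall k : nat,
        qcomm q (Wm 0%N) (G k) = rho q *: Wm k.+1 - rho q *: Wp k /\
        qcomm q (Gt k) (Wm 0%N) = rho q *: Wm k.+1 - rho q *: Wp k,
      forall k : nat,
        qcomm q (G k) (Wp 0%N) = rho q *: Wp k.+1 - rho q *: Wm k /\
        qcomm q (Wp 0%N) (Gt k) = rho q *: Wp k.+1 - rho q *: Wm k,
      forall k l : nat,
        [/\ comm (Wm k) (Wm l) = 0, comm (Wp k) (Wp l) = 0,
            comm (Wm k) (Wp l) + comm (Wp k) (Wm l) = 0,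
            comm (Wm k) (G l) + comm (G k) (Wm l) = 0 &
            comm (Wm k) (Gt l) + comm (Gt k) (Wm l) = 0] &
      forall k l : nat,
        [/\ comm (Wp k) (G l) + comm (G k) (Wp l) = 0,
            comm (Wp k) (Gt l) + comm (Gt k) (Wp l) = 0,
            comm (G k) (G l) = 0, comm (Gt k) (Gt l) = 0 &
            comm (Gt k) (G l) + comm (G k) (Gt l) = 0]].

Definition Bdelta (F : fieldType) (A : algType F) (q : F) (Wm Wp : nat -> A) : A :=
  q ^- 2 *: (Wp 0%N * Wm 0%N) - Wm 0%N * Wp 0%N.

From HB Require Import structures.
From mathcomp Require Import all_boot all_order all_algebra.
From mathcomp Require Import ring.
Set Implicit Arguments. Unset Strict Implicit. Unset Printing Implicit Defensive.
Import GRing.Theory.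
Local Open Scope ring_scope.

(* Since W_{1-n} commutes with W_0, the Leibniz rule turns [B_delta, W_{1-n}]
   into q^{-1} [W_0, [W_{1-n}, W_1]]_q, and [W_{1-n}, W_1] is proportional to
   tilde G_n - G_n.  The relations give [W_0, G_n]_q directly and
   [W_0, tilde G_n]_q after exchanging the arguments of [tilde G_n, W_0]_q, so
   [B_delta, W_{1-n}] is a combination of W_0 tilde G_n and W_{-n} - W_n, which is
   solved for W_{-n}.  The second identity is the same computation for
   [B_delta, W_n], with W_1 in place of W_0. *)

Lemma subrACA (V : zmodType) (a b c d : V) : (a - b) - (c - d) = (a - c) - (b - d).
Proof. by rewrite !opprB addrACA [RHS]addrACA (addrC (- c)). Qed.

Section Commutators.
Variables (F : fieldType) (A : algType F).
Implicit Types (p k : F) (x y z : A).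

Lemma commNC x y : comm y x = - comm x y.
Proof. by rewrite /comm opprB. Qed.

Lemma commBl x y z : comm (x - y) z = comm x z - comm y z.
Proof. by rewrite /comm mulrBl mulrBr subrACA. Qed.

Lemma commZl k x z : comm (k *: x) z = k *: comm x z.
Proof. by rewrite /comm -scalerAl -scalerAr scalerBr. Qed.

Lemma commMl x y z : comm (x * y) z = x * comm y z + comm x z * y.
Proof. by rewrite /comm mulrBr mulrBl !mulrA addrA subrK. Qed.

Lemma qcommBr p x y z : qcomm p x (y - z) = qcomm p x y - qcomm p x z.
Proof. by rewrite /qcomm mulrBr mulrBl !scalerBr subrACA. Qed.

Lemma qcommBl p x y z : qcomm p (x - y) z = qcomm p x z - qcomm p y z.
Proof. by rewrite /qcomm mulrBr mulrBl !scalerBr subrACA. Qed.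

Lemma qcommZr p k x y : qcomm p x (k *: y) = k *: qcomm p x y.
Proof. by rewrite /qcomm -scalerAl -scalerAr !scalerA mulrC [_ * k]mulrC -!scalerA scalerBr. Qed.

Lemma qcommZl p k x y : qcomm p (k *: x) y = k *: qcomm p x y.
Proof. by rewrite /qcomm -scalerAl -scalerAr !scalerA mulrC [_ * k]mulrC -!scalerA scalerBr. Qed.

Lemma scale_qcomm p x y : p != 0 -> p^-1 *: qcomm p x y = x * y - p^-2 *: (y * x).
Proof. by move=> p0; rewrite /qcomm scalerBr !scalerA mulVf // scale1r -exprVn expr2. Qed.

Lemma qcomm_swap p x y : p != 0 ->
  qcomm p x y = (p - p^-3) *: (x * y) - p^-2 *: qcomm p y x.
Proof.
move=> p0; rewrite /qcomm scalerBr !scalerA opprB addrA -scalerDl.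
by congr (_ *: _ - _ *: _); field.
Qed.

Lemma qcomm_swap_rev p x y : p != 0 ->
  qcomm p y x = (p^+3 - p^-1) *: (x * y) - p^+2 *: qcomm p x y.
Proof.
move=> p0; rewrite /qcomm scalerBr !scalerA opprB addrA addrAC -scalerBl [LHS]addrC -scaleNr.
by congr (_ *: _ + _ *: _); field.
Qed.

Lemma comm_skewl p x y z : p != 0 -> comm x z = 0 ->
  comm (p^-2 *: (y * x) - x * y) z = p^-1 *: qcomm p x (comm z y).
Proof.
move=> p0 xz; rewrite scale_qcomm // commBl commZl !commMl xz mulr0 mul0r addr0 add0r.
by rewrite (commNC z) mulrN mulNr scalerN opprK addrC.
Qed.

Lemma comm_skewr p x y z : p != 0 -> comm y z = 0 ->
  comm (p^-2 *: (y * x) - x * y) z = - (p^-1 *: qcomm p (comm x z) y).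
Proof.
move=> p0 yz; rewrite scale_qcomm // commBl commZl !commMl yz mulr0 mul0r addr0 add0r.
by rewrite opprB.
Qed.

End Commutators.

Lemma q2_subV_neq0 (F : fieldType) (q : F) : q != 0 -> q ^+ 4 != 1 -> q ^+ 2 - q ^- 2 != 0.
Proof.
move=> q0; apply: contra_neq => s0; apply/eqP; rewrite -subr_eq0.
have -> : q ^+ 4 - 1 = q ^+ 2 * (q ^+ 2 - q ^- 2) by field.
by rewrite s0 mulr0.
Qed.

Lemma sqr_add1_neq0 (F : fieldType) (q : F) : q ^+ 4 != 1 -> q ^+ 2 + 1 != 0.
Proof.
apply: contra_neq => s0; apply/eqP; rewrite -subr_eq0.
have -> : q ^+ 4 - 1 = (q ^+ 2 + 1) * (q ^+ 2 - 1) by ring.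
by rewrite s0 mul0r.
Qed.

Section Oq.
Variables (F : fieldType) (q : F) (A : algType F) (Wm Wp G Gt : nat -> A).
Hypotheses (q0 : q != 0) (q4 : q ^+ 4 != 1) (rels : Oq_rels q Wm Wp G Gt).

Lemma comm_Bdelta_Wm m :
  q ^+ 2 *: comm (Bdelta q Wm Wp) (Wm m) =
  (q - q^-1) *: (Wm 0%N * Gt m) + (q ^+ 2 - q ^- 2) ^+ 2 *: (Wm m.+1 - Wp m).
Proof.
case: rels => /(_ m) [_ WmWp] /(_ m) [W0G GtW0] _ /(_ 0%N m) [W0Wm _ _ _ _] _.
rewrite /Bdelta comm_skewl // WmWp qcommZr qcommBr qcomm_swap // GtW0 W0G -!scalerBr.
move: (Wm 0%N * Gt m) (Wm m.+1 - Wp m) => u E.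
rewrite !scalerBr !scalerA -addrA -opprD -scalerDl -scaleNr.
congr (_ *: _ + _ *: _); rewrite /rho; field; by rewrite q0 -expr2 sqr_add1_neq0.
Qed.

Lemma comm_Bdelta_Wp m :
  - comm (Bdelta q Wm Wp) (Wp m) =
  (q - q^-1) *: (Wp 0%N * Gt m) + (q ^+ 2 - q ^- 2) ^+ 2 *: (Wp m.+1 - Wm m).
Proof.
case: rels => /(_ m) [W0Wp _] _ /(_ m) [GW1 W1Gt] /(_ 0%N m) [_ W1Wp _ _ _] _.
rewrite /Bdelta comm_skewr // opprK W0Wp qcommZl qcommBl (qcomm_swap_rev (Wp 0%N)) //.
rewrite W1Gt GW1 -!scalerBr.
move: (Wp 0%N * Gt m) (Wp m.+1 - Wm m) => u E.
rewrite !scalerBr !scalerA -addrA -opprD -scalerDl -scaleNr.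
congr (_ *: _ + _ *: _); rewrite /rho; field; by rewrite q0 -expr2 sqr_add1_neq0.
Qed.

End Oq.

Lemma scale_solve (F : fieldType) (V : lmodType F) (a b c : F) (x y u w : V) :
  c != 0 -> b *: w = a *: u + c *: (x - y) -> x = y - (a / c) *: u + (b / c) *: w.
Proof.
move=> c0 h; have -> : (b / c) *: w = c^-1 *: (b *: w) by rewrite scalerA mulrC.
by rewrite h scalerDr !scalerA mulVf // scale1r (mulrC _ a) addrA subrK addrC subrK.
Qed.

Theorem lemma11p5 (F : fieldType) (q : F)
    (hq0 : q != 0) (hq : forall n : nat, (0 < n)%N -> q ^+ n != 1)
    (A : algType F) (Wm Wp G Gt : nat -> A)
    (hrel : Oq_rels q Wm Wp G Gt) (m : nat) :
  Wm m.+1 = Wp m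
            - ((q - q^-1) / (q ^+ 2 - q ^- 2) ^+ 2) *: (Wm 0%N * Gt m)
            + (q ^+ 2 / (q ^+ 2 - q ^- 2) ^+ 2) *: comm (Bdelta q Wm Wp) (Wm m)
  /\
  Wp m.+1 = Wm m
            - ((q - q^-1) / (q ^+ 2 - q ^- 2) ^+ 2) *: (Wp 0%N * Gt m)
            - ((q ^+ 2 - q ^- 2) ^+ 2)^-1 *: comm (Bdelta q Wm Wp) (Wp m).
Proof.
have q4 := hq 4%N isT.
have s0 : (q ^+ 2 - q ^- 2) ^+ 2 != 0 by rewrite expf_neq0 // q2_subV_neq0.
split.
  exact: scale_solve s0 (comm_Bdelta_Wm hq0 q4 hrel m).
have := scale_solve s0 (etrans (scaleN1r _) (comm_Bdelta_Wp hq0 q4 hrel m)).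
by rewrite mulN1r scaleNr.
Qed.
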